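(* The Ranked Pairs VCCR $rp$, the Beat Path VCCR $bp$, and the GOCHA VCCR $gocha$ each satisfy Coherent Defeat: for every profile $\mathbf P$ and $x,y\in X(\mathbf P)$, if $\mathrm{Margin}_{\mathbf P}(x,y)>0$ and there is no majority path from $y$ to $x$, then $(x,y)$ belongs to $rp(\mathbf P)$, $bp(\mathbf P)$ and $gocha(\mathbf P)$.
   Context: Profiles: $\mathbf P:V\to\mathcal L(X)$, $V$ nonempty finite set of voters, $X=X(\mathbf P)$ nonempty finite set of candidates, $\mathcal L(X)$ strict linear orders. $\mathrm{Margin}_{\mathbf P}(x,y)$ = #voters ranking $x$ above $y$ minus #ranking $y$ above $x$. A majority path from $x_1$ to $x_n$ is $(x_1,\dots,x_n)$ with all $\mathrm{Margin}_{\mathbf P}(x_i,x_{i+1})>0$; its strength is the minimum of these margins. Ranked Pairs: let $Pairs(\mathbf P)=\{(x,y): x\ne y,\ \mathrm{Margin}_{\mathbf P}(x,y)\ge 0\}$; a tie-breaker is a strict linear order $L$ on $Pairs(\mathbf P)$. Order $Pairs(\mathbf P)$ by decreasing margin, breaking ties by $L$: $(x_1,y_1),\dots,(x_m,y_m)$. Let $D_0=\varnothing$, and $D_i=D_{i-1}\cup\{(x_i,y_i)\}$ if this is acyclic, else $D_i=D_{i-1}\cup\{(y_i,x_i)\}$; set $rp(\mathbf P,L)=D_m$ and $rp(\mathbf P)=\bigcap_L rp(\mathbf P,L)$ over all tie-breakers $L$. Beat Path: $\mathrm{Strength}_{\mathbf P}(x,y)$ is the maximum strength of a majority path from $x$ to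 $y$ ($0$ if none); $(x,y)\in bp(\mathbf P)$ iff $\mathrm{Strength}_{\mathbf P}(x,y)>\mathrm{Strength}_{\mathbf P}(y,x)$. GOCHA: $(x,y)\in gocha(\mathbf P)$ iff there is a majority path from $x$ to $y$ but none from $y$ to $x$. *)

From HB Require Import structures.
From mathcomp Require Import all_boot all_order all_algebra.
From mathcomp Require Import boolp.
Set Implicit Arguments. Unset Strict Implicit. Unset Printing Implicit Defensive.
Import Order.TTheory GRing.Theory Num.Theory.

Section Voting.
Variables (V X : finType).

Definition strict_linear_order (R : rel X) : Prop :=
  [/\ irreflexive R, transitive R & forall a b, a != b -> R a b || R b a].

(** A profile: each voter v : V is assigned a strict linear order P v on X
    (P v a b means voter v ranks a above b). *)
Definition is_profile (P : V -> rel X) : Prop :=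
  forall v, strict_linear_order (P v).

Definition margin (P : V -> rel X) (a b : X) : int :=
  (Posz #|[set v | P v a b]| - Posz #|[set v | P v b a]|)%R.

(** x :: p is a majority path from x to y: (x = x_1, x_2, ..., x_n = y), n >= 2,
    every consecutive margin positive. *)
Definition majority_path (P : V -> rel X) (x : X) (p : seq X) (y : X) : bool :=
  [&& p != [::], path (fun a b => (0 < margin P a b)%R) x p & last x p == y].

Definition exists_majority_path (P : V -> rel X) (x y : X) : Prop :=
  exists p, majority_path P x p y.

Definition path_strength (P : V -> rel X) (x : X) (p : seq X) : int :=
  match pairmap (margin P) x p with
  | [::] => 0%R
  | m :: ms => foldr Order.min m ms
  end.

(** Strength_P(x,y): maximum strength of a majority path from x to y, 0 if none.
    Strengths of majority paths are positive margins, hence lie in 1..#|V|,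
    so the maximum is taken over k <= #|V|. *)
Definition Strength (P : V -> rel X) (x y : X) : int :=
  Posz (\max_(k < #|V|.+1 |
        `[< exists p, majority_path P x p y /\ path_strength P x p = Posz k >])
      (k : nat))%N.

Definition bp (P : V -> rel X) (x y : X) : Prop :=
  (Strength P y x < Strength P x y)%R.

Definition gocha (P : V -> rel X) (x y : X) : Prop :=
  exists_majority_path P x y /\ ~ exists_majority_path P y x.

Definition Pairs (P : V -> rel X) : {set X * X} :=
  [set ab | (ab.1 != ab.2) && (0 <= margin P ab.1 ab.2)%R].

Definition tie_breaker (P : V -> rel X) (L : rel (X * X)) : Prop :=
  [/\ {in Pairs P, irreflexive L},
      {in Pairs P & &, transitive L} &
      {in Pairs P &, forall p q, p != q -> L p q || L q p}].

Definition rp_order (P : V -> rel X) (L : rel (X * X)) : rel (X * X) :=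
  fun p q => (margin P q.1 q.2 < margin P p.1 p.2)%R
             || ((margin P p.1 p.2 == margin P q.1 q.2) && ((p == q) || L p q)).

Definition rp_list (P : V -> rel X) (L : rel (X * X)) : seq (X * X) :=
  sort (rp_order P L) (enum (Pairs P)).

Definition acyclic (D : {set X * X}) : bool :=
  [forall a, ~~ [exists b, ((a, b) \in D) && connect (fun u w => (u, w) \in D) b a]].

Definition rp_step (D : {set X * X}) (ab : X * X) : {set X * X} :=
  if acyclic (ab |: D) then ab |: D else (ab.2, ab.1) |: D.

Definition rp_L (P : V -> rel X) (L : rel (X * X)) : {set X * X} :=
  foldl rp_step set0 (rp_list P L).

Definition rp (P : V -> rel X) (x y : X) : Prop :=
  forall L, tie_breaker P L -> (x, y) \in rp_L P L.

End Voting.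

(* GOCHA is immediate from the one-step majority path x -> y.  For Beat Path,
   Strength(y, x) = 0 as there is no path from y to x, while the one-step path
   gives Strength(x, y) >= Margin(x, y) > 0.  For Ranked Pairs, every pair
   processed before (x, y) has margin at least Margin(x, y) > 0, and as long as
   only such pairs are processed, every locked edge u -> w is backed by a
   majority path from u to w (a reversed edge is backed by the locked chain that
   forced the reversal).  When (x, y) comes up, it could only be rejected if the
   locked edges already led from y to x, which would give a majority path from
   y to x; so (x, y) is locked, and locked edges are never removed. *)
From HB Require Import structures.
From mathcomp Require Import all_boot all_order all_algebra.
From mathcomp Require Import boolp zify.
Import Order.TTheory GRing.Theory Num.Theory.

Set Implicit Arguments. Unset Strict Implicit.

Section Acyclic.
Variable X : finType.
Implicit Types (D : {set X * X}) (e : X * X).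

Definition edge_rel D : rel X := fun u w => (u, w) \in D.

Lemma acyclicP D :
  reflect (forall a b, (a, b) \in D -> ~~ connect (edge_rel D) b a) (acyclic D).
Proof.
apply: (iffP forallP) => [acD a b ab_in | acD a].
  by apply: contra (acD a) => ba; apply/existsP; exists b; rewrite ab_in.
by apply/existsP => -[b /andP[ab_in]]; apply/negP/acD.
Qed.

Lemma acyclic0 : acyclic (set0 : {set X * X}).
Proof. by apply/acyclicP => a b; rewrite inE. Qed.

Lemma acyclic_connect_antisym D a b :
  acyclic D -> connect (edge_rel D) a b -> connect (edge_rel D) b a -> a = b.
Proof.
move=> /acyclicP acD /connectP[[|c p] /=]; first by move=> _ ->.
case/andP=> ac_in c_p b_last ba; have cb : connect (edge_rel D) c b.
  by apply/connectP; exists p.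
by have /negP[] := acD a c ac_in; apply: connect_trans cb ba.
Qed.

Lemma connect_setU1 D e u w :
  connect (edge_rel (e |: D)) u w ->
  connect (edge_rel D) u w \/
  connect (edge_rel D) u e.1 /\ connect (edge_rel D) e.2 w.
Proof.
case/connectP=> p; elim: p u => [|v p IHp] u /=; first by move=> _ ->; left.
case/andP=> uv_in v_p /(IHp v v_p) {IHp v_p} vw.
move: uv_in; rewrite /edge_rel in_setU1 => /orP[/eqP uv_e | uv_in].
  by subst e; right; split=> //=; case: vw => [|[]].
have uv : connect (edge_rel D) u v by apply: connect1.
case: vw => [vw | [ve1 e2w]]; first by left; apply: connect_trans vw.
by right; split=> //; apply: connect_trans ve1.
Qed.

Lemma acyclic_setU1 D e :
  acyclic D -> ~~ connect (edge_rel D) e.2 e.1 -> acyclic (e |: D).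
Proof.
move=> acD ne21; have /acyclicP acD' := acD.
apply/acyclicP => a b; rewrite in_setU1 => /orP[/eqP ab_e | ab_in].
  by subst e; apply: contra ne21 => /connect_setU1[| []].
apply/negP => /connect_setU1[ba | [be1 e2a]]; first by move/negP: (acD' a b ab_in).
by move/negP: ne21; apply; apply: connect_trans e2a (connect_trans (connect1 _) be1).
Qed.

Lemma rp_stepE D e :
  acyclic D -> ~~ connect (edge_rel D) e.2 e.1 -> rp_step D e = e |: D.
Proof. by move=> acD ne21; rewrite /rp_step acyclic_setU1. Qed.

Lemma rp_step_rejected D e :
  acyclic D -> ~~ acyclic (e |: D) -> connect (edge_rel D) e.2 e.1.
Proof. by move=> acD; apply: contraNT; apply: acyclic_setU1. Qed.

Lemma rp_step_acyclic D e : acyclic D -> e.1 != e.2 -> acyclic (rp_step D e).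
Proof.
move=> acD ne12; rewrite /rp_step; case: ifP => // /negbT /(rp_step_rejected acD) e21.
apply: acyclic_setU1 => //=; apply: contra ne12 => e12.
by apply/eqP/(acyclic_connect_antisym acD).
Qed.

Lemma subset_foldl_rp_step D s : D \subset foldl (@rp_step X) D s.
Proof.
elim: s D => [|e s IHs] D //=; apply: subset_trans (IHs _).
by rewrite /rp_step; case: ifP => _; apply: subsetUr.
Qed.

End Acyclic.

Section MajorityPaths.
Variables (V X : finType) (P : V -> rel X).
Implicit Types (D : {set X * X}) (e : X * X).

Lemma margin_xx a : margin P a a = 0.
Proof. by rewrite /margin subrr. Qed.

Lemma margin_gt0_neq a b : (0 < margin P a b)%R -> a != b.
Proof. by apply: contraTneq => ->; rewrite margin_xx ltxx. Qed.

Lemma majority_path1 a b : (0 < margin P a b)%R -> majority_path P a [:: b] b.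
Proof. by move=> ab; rewrite /majority_path /= ab !eqxx. Qed.

Lemma majority_path_cat a p b q c :
  majority_path P a p b -> majority_path P b q c -> majority_path P a (p ++ q) c.
Proof.
case/and3P=> p_nil a_p /eqP b_last /and3P[_ b_q /eqP c_last].
have pq_nil : p ++ q != [::] by case: p p_nil {a_p b_last}.
by rewrite /majority_path pq_nil cat_path a_p last_cat b_last b_q c_last eqxx.
Qed.

Definition majority_backed D :=
  forall u w, (u, w) \in D -> exists_majority_path P u w.

Lemma connect_majority_backed D u w :
  majority_backed D -> connect (edge_rel D) u w -> u != w ->
  exists_majority_path P u w.
Proof.
move=> backD /connectP[p]; elim: p u => [|v p IHp] u /=.
  by move=> _ ->; rewrite eqxx.
case/andP=> uv_in v_p w_last uw; have [p1 u_p1_v] := backD _ _ uv_in.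
have [<- | vw] := eqVneq v w; first by exists p1.
have [q v_q_w] := IHp v v_p w_last vw.
by exists (p1 ++ q); apply: majority_path_cat u_p1_v v_q_w.
Qed.

Lemma rp_step_majority_backed D e :
  acyclic D -> majority_backed D -> (0 < margin P e.1 e.2)%R ->
  majority_backed (rp_step D e).
Proof.
case: e => a b acD backD /= ab u w.
rewrite /rp_step; case: ifP => [_ | /negbT rejected];
  rewrite in_setU1 => /orP[/eqP [-> ->] | /backD //].
  by exists [:: b]; apply: majority_path1.
apply: connect_majority_backed (rp_step_rejected acD rejected) _ => //.
by rewrite eq_sym margin_gt0_neq.
Qed.

Lemma foldl_rp_step_invariant D s :
  all (fun e => 0 < margin P e.1 e.2)%R s -> acyclic D -> majority_backed D ->
  acyclic (foldl (@rp_step X) D s) /\ majority_backed (foldl (@rp_step X) D s).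
Proof.
elim: s D => [|e s IHs] D //= /andP[e_pos s_pos] acD backD.
apply: IHs => //; first by rewrite rp_step_acyclic ?margin_gt0_neq.
exact: rp_step_majority_backed.
Qed.

End MajorityPaths.

Section RankedPairs.
Variables (V X : finType) (P : V -> rel X) (L : rel (X * X)).
Hypothesis tbL : tie_breaker P L.

Definition margin_ge (e f : X * X) : bool := (margin P f.1 f.2 <= margin P e.1 e.2)%R.

Lemma rp_order_total : {in Pairs P &, total (rp_order P L)}.
Proof.
case: tbL => _ _ L_total e f e_in f_in; rewrite /rp_order.
case: (ltgtP (margin P f.1 f.2) (margin P e.1 e.2)) => //= _.
by have [// | ef] := eqVneq e f; rewrite orbCA L_total ?orbT.
Qed.

Lemma rp_list_margin_sorted : pairwise margin_ge (rp_list P L).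
Proof.
rewrite -sorted_pairwise; last by move=> f e g fe eg; apply: le_trans fe.
apply: sub_sorted (sort_sorted_in rp_order_total _).
  by move=> e f /orP[/ltW // | /andP[/eqP me_mf _]]; rewrite /margin_ge me_mf.
by apply/allP => e; rewrite mem_enum.
Qed.

Lemma rp_L_coherent x y :
  (0 < margin P x y)%R -> ~ exists_majority_path P y x -> (x, y) \in rp_L P L.
Proof.
move=> xy_pos no_yx; have xy_neq := margin_gt0_neq xy_pos.
have := rp_list_margin_sorted.
have: (x, y) \in rp_list P L by rewrite mem_sort mem_enum inE /= xy_neq ltW.
rewrite /rp_L => /splitPr[s1 s2].
rewrite pairwise_cat => /and3P[s1_ge_xy _ _].
have s1_pos : all (fun e => 0 < margin P e.1 e.2)%R s1.
  apply/allP => e e_in; apply: lt_le_trans xy_pos _.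
  exact: (allrelP s1_ge_xy) e (x, y) e_in (mem_head _ _).
have backed0 : majority_backed P set0 by move=> u w; rewrite inE.
have [acD backD] := foldl_rp_step_invariant s1_pos (acyclic0 X) backed0.
rewrite foldl_cat /= rp_stepE //=; last first.
  apply/negP => yx; apply: no_yx; apply: connect_majority_backed backD yx _.
  by rewrite eq_sym.
by apply: (subsetP (subset_foldl_rp_step _ s2)); rewrite setU11.
Qed.

End RankedPairs.

Section BeatPath.
Variables (V X : finType) (P : V -> rel X).

Lemma Strength_eq0 x y : ~ exists_majority_path P x y -> Strength P x y = 0.
Proof.
move=> no_xy; rewrite /Strength big_pred0 // => k.
by apply: asboolF => -[p [xpy _]]; apply: no_xy; exists p.
Qed.

Lemma margin_le_card a b : (margin P a b <= #|V|)%R.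
Proof. by have := max_card [set v | P v a b]; rewrite /margin; lia. Qed.

Lemma margin_le_Strength x y :
  (0 < margin P x y)%R -> (margin P x y <= Strength P x y)%R.
Proof.
move=> xy_pos; have m_def : margin P x y = `|margin P x y|%N by rewrite gez0_abs ?ltW.
have m_lt : (`|margin P x y| < #|V|.+1)%N by rewrite ltnS -lez_nat -m_def margin_le_card.
rewrite m_def lez_nat; apply: (leq_bigmax_cond (Ordinal m_lt)).
by apply: asboolT; exists [:: y]; split; [exact: majority_path1 | rewrite -m_def].
Qed.

Lemma bp_coherent x y :
  (0 < margin P x y)%R -> ~ exists_majority_path P y x -> bp P x y.
Proof.
move=> xy_pos no_yx; rewrite /bp Strength_eq0 //.
exact: lt_le_trans xy_pos (margin_le_Strength xy_pos).
Qed.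

End BeatPath.

Lemma gocha_coherent (V X : finType) (P : V -> rel X) x y :
  (0 < margin P x y)%R -> ~ exists_majority_path P y x -> gocha P x y.
Proof. by move=> xy_pos no_yx; split=> //; exists [:: y]; apply: majority_path1. Qed.

Theorem proposition3p8 (V X : finType) (P : V -> rel X) :
  (0 < #|V|)%N -> (0 < #|X|)%N -> is_profile P ->
  forall x y : X,
    (0 < margin P x y)%R -> ~ exists_majority_path P y x ->
    [/\ rp P x y, bp P x y & gocha P x y].
Proof.
move=> _ _ _ x y xy_pos no_yx; split.
- by move=> L tbL; apply: rp_L_coherent.
- exact: bp_coherent.
- exact: gocha_coherent.
Qed.
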